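(* Let $F_X,F_Y$ be univariate distributions. The set $\mathfrak{Q}^{F_X,F_Y}$ of bivariate quasi-distributions with margins $F_X,F_Y$ is closed under pointwise infima and suprema (of nonempty subsets). In particular, for every nonempty set $\mathcal{G}$ of bivariate distributions all having margins $F_X$ and $F_Y$, the pointwise infimum $\inf_{F\in\mathcal{G}}F$ and supremum $\sup_{F\in\mathcal{G}}F$ are quasi-distributions (with margins $F_X,F_Y$).
   Context: $\overline{\mathbb{R}}=\mathbb{R}\cup\{-\infty,\infty\}$. A univariate distribution is a nondecreasing $G:\overline{\mathbb{R}}\to[0,1]$ with $G(-\infty)=0$, $G(\infty)=1$ (not necessarily right continuous). The volume of $[x_1,x_2]\times[y_1,y_2]$ w.r.t. $F$ is $F(x_1,y_1)+F(x_2,y_2)-F(x_2,y_1)-F(x_1,y_2)$. A bivariate quasi-distribution is $F:\overline{\mathbb{R}}^2\to[0,1]$ with $F(x,-\infty)=F(-\infty,y)=0$, $F(\infty,\infty)=1$, and nonnegative volume for every rectangle with corners in $\overline{\mathbb{R}}^2$ intersecting the boundary (points having a coordinate $\pm\infty$); a bivariate distribution additionally has nonnegative volume for every rectangle. Margins are $F(\cdot,\infty)$ and $F(\infty,\cdot)$. *)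

From HB Require Import structures.
From mathcomp Require Import all_boot all_order all_algebra.
From mathcomp Require Import all_classical all_reals.
From mathcomp Require Import constructive_ereal ereal.
Set Implicit Arguments. Unset Strict Implicit. Unset Printing Implicit Defensive.
Import Order.TTheory GRing.Theory Num.Theory.
Local Open Scope classical_set_scope.
Local Open Scope ring_scope.

Section Defs.
Variable R : realType.

Definition einfinite (x : \bar R) : Prop := x = +oo%E \/ x = -oo%E.

Definition univ_distribution (G : \bar R -> R) : Prop :=
  (forall x, 0 <= G x <= 1) /\
  (forall x y : \bar R, (x <= y)%E -> G x <= G y) /\
  G -oo%E = 0 /\ G +oo%E = 1.

Definition volume (F : \bar R -> \bar R -> R) (x1 x2 y1 y2 : \bar R) : R :=
  F x1 y1 + F x2 y2 - F x2 y1 - F x1 y2.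

Definition meets_boundary (x1 x2 y1 y2 : \bar R) : Prop :=
  exists x y : \bar R, [/\ (x1 <= x)%E, (x <= x2)%E, (y1 <= y)%E, (y <= y2)%E
                        & einfinite x \/ einfinite y].

Definition biv_base (F : \bar R -> \bar R -> R) : Prop :=
  (forall x y, 0 <= F x y <= 1) /\
  (forall x, F x -oo%E = 0) /\ (forall y, F -oo%E y = 0) /\
  F +oo%E +oo%E = 1.

Definition quasi_distribution (F : \bar R -> \bar R -> R) : Prop :=
  biv_base F /\
  forall x1 x2 y1 y2 : \bar R, (x1 <= x2)%E -> (y1 <= y2)%E ->
    meets_boundary x1 x2 y1 y2 -> 0 <= volume F x1 x2 y1 y2.

Definition biv_distribution (F : \bar R -> \bar R -> R) : Prop :=
  biv_base F /\
  forall x1 x2 y1 y2 : \bar R, (x1 <= x2)%E -> (y1 <= y2)%E ->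
    0 <= volume F x1 x2 y1 y2.

Definition has_margins (F : \bar R -> \bar R -> R) (FX FY : \bar R -> R) : Prop :=
  (forall x, F x +oo%E = FX x) /\ (forall y, F +oo%E y = FY y).

Definition Qset (FX FY : \bar R -> R) : set (\bar R -> \bar R -> R) :=
  [set F | quasi_distribution F /\ has_margins F FX FY].

Definition pinf (S : set (\bar R -> \bar R -> R)) : \bar R -> \bar R -> R :=
  fun x y => inf [set F x y | F in S].
Definition psup (S : set (\bar R -> \bar R -> R)) : \bar R -> \bar R -> R :=
  fun x y => sup [set F x y | F in S].
End Defs.

(** The conditions defining a quasi-distribution with margins [FX], [FY] only
    involve rectangles touching the boundary, and on such a rectangle the
    volume is an increment of one section [F x] or [F^~ y], possibly subtracted
    from the corresponding increment of a margin.  So [F] is in the set iff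
    each section is nondecreasing with increments dominated by those of the
    margin.  Pointwise infima and suprema preserve constants, pointwise order
    and one-sided bounds on differences, hence preserve this characterization,
    the boundary values and the margins. *)

From HB Require Import structures.
From mathcomp Require Import all_boot all_order all_algebra.
From mathcomp Require Import all_classical all_reals.
From mathcomp Require Import constructive_ereal ereal.
From mathcomp Require Import lra.
Import Order.TTheory GRing.Theory Num.Theory.
Local Open Scope classical_set_scope.
Local Open Scope ring_scope.

Section InfSupImage.
Variables (R : realType) (T : Type) (S : set T).
Hypothesis S0 : S !=set0.

Lemma inf_image_cst (a : T -> R) k : (forall t, S t -> a t = k) -> inf (a @` S) = k.
Proof.
by move=> /eq_imagel->; rewrite set_cst ifN_eq ?inf1//; apply/set0P.
Qed.

Lemma sup_image_cst (a : T -> R) k : (forall t, S t -> a t = k) -> sup (a @` S) = k.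
Proof.
by move=> /eq_imagel->; rewrite set_cst ifN_eq ?sup1//; apply/set0P.
Qed.

Lemma inf_imageB_le (a b : T -> R) c : has_lbound (b @` S) ->
  (forall t, S t -> b t - a t <= c) -> inf (b @` S) - inf (a @` S) <= c.
Proof.
move=> bS le_ba; rewrite lerBlDr addrC -lerBlDr.
apply: lb_le_inf; first by case: S0 => t St; exists (a t), t.
move=> _ [t St <-]; rewrite lerBlDr.
by apply: le_trans (ge_inf bS (imageP _ St)) _; rewrite -lerBlDl le_ba.
Qed.

Lemma sup_imageB_le (a b : T -> R) c : has_ubound (a @` S) ->
  (forall t, S t -> b t - a t <= c) -> sup (b @` S) - sup (a @` S) <= c.
Proof.
move=> aS le_ba; rewrite lerBlDr.
apply: ge_sup; first by case: S0 => t St; exists (b t), t.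
move=> _ [t St <-]; apply: le_trans (_ : a t + c <= _).
  by rewrite -lerBlDl le_ba.
by rewrite addrC lerD2l; apply: ub_le_sup aS _ (imageP _ St).
Qed.

End InfSupImage.

Section Niveloid.
Context {R : realType} {T : Type}.

Definition unit_bounded_on (S : set T) (a : T -> R) := forall t, S t -> 0 <= a t <= 1.

(** A normalized niveloid in the sense of Dolecki and Greco, restricted to
    [[0,1]]-valued families. *)
Definition normalized_niveloid (S : set T) (m : (T -> R) -> R) :=
  (forall a k, (forall t, S t -> a t = k) -> m a = k) /\
  (forall a b c, unit_bounded_on S a -> unit_bounded_on S b ->
     (forall t, S t -> b t - a t <= c) -> m b - m a <= c).

Lemma inf_niveloid {S : set T} : S !=set0 ->
  normalized_niveloid S (fun a => inf (a @` S)).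
Proof.
move=> S0; split=> [a k|a b c _ bS]; first exact: inf_image_cst.
by apply: inf_imageB_le => //; exists 0 => _ [t /bS /andP[b0 _] <-].
Qed.

Lemma sup_niveloid {S : set T} : S !=set0 ->
  normalized_niveloid S (fun a => sup (a @` S)).
Proof.
move=> S0; split=> [a k|a b c aS _]; first exact: sup_image_cst.
by apply: sup_imageB_le => //; exists 1 => _ [t /aS /andP[_ a1] <-].
Qed.

Context {S : set T} {m : (T -> R) -> R}.
Hypothesis m_niveloid : normalized_niveloid S m.

Lemma niveloid_unit_bounded a : unit_bounded_on S a -> 0 <= m a <= 1.
Proof.
case: m_niveloid => m_cst m_subr aS.
have [bnd0 bnd1] : unit_bounded_on S (fun=> 0) /\ unit_bounded_on S (fun=> 1).
  by split=> t _; rewrite lexx ler01.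
have ge0 : m (fun=> 0) - m a <= 0.
  by apply: (m_subr _ _ _ aS bnd0) => t /aS /andP[a0 _]; rewrite sub0r oppr_le0.
have le1 : m a - m (fun=> 1) <= 0.
  by apply: (m_subr _ _ _ bnd1 aS) => t /aS /andP[_ a1]; rewrite subr_le0.
have m0 : m (fun=> 0) = 0 by apply: m_cst.
have m1 : m (fun=> 1) = 1 by apply: m_cst.
by rewrite m0 in ge0; rewrite m1 in le1; apply/andP; split; lra.
Qed.

Definition increments_within {d} {X : porderType d} (g h : X -> R) :=
  forall u v : X, (u <= v)%O -> 0 <= g v - g u <= h v - h u.

Lemma niveloid_increments_within {d} {X : porderType d} (g : T -> X -> R) h :
  (forall t, S t -> increments_within (g t) h) ->
  (forall u, unit_bounded_on S (g^~ u)) ->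
  increments_within (fun u => m (g^~ u)) h.
Proof.
case: m_niveloid => _ m_subr g_incr g01 u v uv.
have g_uv t : S t -> 0 <= g t v - g t u <= h v - h u by move/g_incr; apply.
apply/andP; split.
- rewrite subr_ge0 -subr_le0; apply: (m_subr _ _ _ (g01 v) (g01 u)).
  by move=> t /g_uv /andP[+ _]; rewrite subr_ge0 subr_le0.
- by apply: (m_subr _ _ _ (g01 u) (g01 v)) => t /g_uv /andP[].
Qed.

End Niveloid.

Section QuasiDistribution.
Variables (R : realType) (FX FY : \bar R -> R).
Local Open Scope ereal_scope.

Lemma meets_boundaryP {x1 x2 y1 y2 : \bar R} : x1 <= x2 -> y1 <= y2 ->
  meets_boundary x1 x2 y1 y2 <-> [\/ x1 = -oo, x2 = +oo, y1 = -oo | y2 = +oo].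
Proof.
move=> lex ley; split.
- move=> [x [y [lx1 lx2 ly1 ly2 [[]|[]] e]]]; subst.
  + by apply: Or42; apply/eqP; rewrite -leye_eq.
  + by apply: Or41; apply/eqP; rewrite -leeNy_eq.
  + by apply: Or44; apply/eqP; rewrite -leye_eq.
  + by apply: Or43; apply/eqP; rewrite -leeNy_eq.
- case=> ->; [exists -oo, y1|exists +oo, y1|exists x1, -oo|exists x1, +oo];
    split; rewrite ?leNye ?leey //;
    by [left; left|left; right|right; left|right; right].
Qed.

Definition increments_within_margins (F : \bar R -> \bar R -> R) :=
  (forall x, increments_within (F x) FY) /\ (forall y, increments_within (F^~ y) FX).

Lemma quasi_distributionP (F : \bar R -> \bar R -> R) :
  biv_base F -> has_margins F FX FY ->
  quasi_distribution F <-> increments_within_margins F.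
Proof.
move=> FB [FXm FYm]; have [_ [F_0 [F0_ _]]] := FB.
split=> [[_ V]|[Fx Fy]].
  have {}V x1 x2 y1 y2 : x1 <= x2 -> y1 <= y2 ->
      [\/ x1 = -oo, x2 = +oo, y1 = -oo | y2 = +oo] -> (0 <= volume F x1 x2 y1 y2)%R.
    by move=> lex ley /(meets_boundaryP lex ley); apply: V.
  split=> [x y1 y2 ley|y x1 x2 lex]; apply/andP; split.
  - by have := V _ _ _ _ (leNye x) ley (Or41 _ _ _ erefl); rewrite /volume !F0_; lra.
  - by have := V _ _ _ _ (leey x) ley (Or42 _ _ _ erefl); rewrite /volume !FYm; lra.
  - by have := V _ _ _ _ lex (leNye y) (Or43 _ _ _ erefl); rewrite /volume !F_0; lra.
  - by have := V _ _ _ _ lex (leey y) (Or44 _ _ _ erefl); rewrite /volume !FXm; lra.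
split=> // x1 x2 y1 y2 lex ley /(meets_boundaryP lex ley)[]->; rewrite /volume.
- by rewrite !F0_; have /andP[] := Fx x2 _ _ ley; lra.
- by rewrite !FYm; have /andP[] := Fx x1 _ _ ley; lra.
- by rewrite !F_0; have /andP[] := Fy y2 _ _ lex; lra.
- by rewrite !FXm; have /andP[] := Fy y1 _ _ lex; lra.
Qed.

Lemma biv_distribution_quasi (F : \bar R -> \bar R -> R) :
  biv_distribution F -> quasi_distribution F.
Proof. by case=> FB V; split=> // x1 x2 y1 y2 lex ley _; apply: V. Qed.

Lemma Qset_niveloid {S m} : normalized_niveloid S m -> S `<=` Qset FX FY ->
  Qset FX FY (fun x y => m (fun F => F x y)).
Proof.
move=> mS SQ; have [m_cst _] := mS.
have S01 x y : unit_bounded_on S (fun F => F x y) by move=> F /SQ[[[+ _] _] _].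
have SI F : S F -> increments_within_margins F.
  by move=> /SQ[QF [FXm FYm]]; apply/quasi_distributionP => //; case: QF.
have base : biv_base (fun x y => m (fun F => F x y)).
  split=> [x y|]; first exact: (niveloid_unit_bounded mS _ (S01 x y)).
  split=> [x|]; first by apply: m_cst => F /SQ[[[_ [+ _]] _] _].
  split=> [y|]; first by apply: m_cst => F /SQ[[[_ [_ [+ _]]] _] _].
  by apply: m_cst => F /SQ[[[_ [_ [_ +]]] _] _].
have margins : has_margins (fun x y => m (fun F => F x y)) FX FY.
  by split=> z; apply: m_cst => F /SQ[_ []].
split=> //; apply/quasi_distributionP => //; split.
- move=> x; apply: (niveloid_increments_within mS (fun F => F x)) => //.
  by move=> F /SI[+ _].
- move=> y; apply: (niveloid_increments_within mS (fun F x => F x y)) => //.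
  by move=> F /SI[_ +].
Qed.

End QuasiDistribution.

Theorem lemma13 (R : realType) (FX FY : \bar R -> R) :
  univ_distribution FX -> univ_distribution FY ->
  (forall S : set (\bar R -> \bar R -> R), S !=set0 -> S `<=` Qset FX FY ->
     Qset FX FY (pinf S) /\ Qset FX FY (psup S)) /\
  (forall G : set (\bar R -> \bar R -> R), G !=set0 ->
     (forall F, G F -> biv_distribution F /\ has_margins F FX FY) ->
     Qset FX FY (pinf G) /\ Qset FX FY (psup G)).
Proof.
(* The closure property does not need the margins to be distributions. *)
move=> _ _.
have Qset_lattice S : S !=set0 -> S `<=` Qset FX FY ->
    Qset FX FY (pinf S) /\ Qset FX FY (psup S).
  move=> S0 SQ; split.
  - exact: (Qset_niveloid _ FX FY (inf_niveloid S0) SQ).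
  - exact: (Qset_niveloid _ FX FY (sup_niveloid S0) SQ).
split=> // G G0 GD; apply: Qset_lattice => // F /GD[/biv_distribution_quasi QF MF].
by split.
Qed.
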